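(* The policy Match the Longest is non-expansive: for all $x,x'\in\mathbb X$, all $v\in\mathcal V$ and all $\sigma\in\mathcal S$, $$\|x'\circledcirc_{\textsc{ml}}(v,\sigma)-x\circledcirc_{\textsc{ml}}(v,\sigma)\|_1\le\|x'-x\|_1.$$
   Context: $G=(\mathcal V,\mathcal E)$ is a finite connected simple graph, $i - j$ denotes adjacency, $\mathcal E(v)$ the neighbours of $v$. $\mathbb X=\{x\in\mathbb N^{\mathcal V}: x(i)x(j)=0 \text{ whenever } i - j\}$. A list of preferences $\sigma=(\sigma(i))_{i\in\mathcal V}\in\mathcal S$ gives for each class $i$ a linear ordering $\sigma(i)$ of $\mathcal E(i)$; for ML these are drawn uniformly on $\mathcal S$. With $\mathcal P(x,v)=\{j\in\mathcal E(v):x(j)>0\}$, set $x\circledcirc_{\textsc{ml}}(v,\sigma)=x+\mathbf e_v$ if $\mathcal P(x,v)=\emptyset$, and $x-\mathbf e_{p(x,v,\sigma)}$ otherwise, where $\mathbf e_i$ is the $i$-th canonical basis vector and $p(x,v,\sigma)$ is the first element, in the ordering $\sigma(v)$, of $\mathcal L(x,v)=\{i\in\mathcal E(v):x(i)=\max_{j\in\mathcal E(v)}x(j)\}$. *)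

From mathcomp Require Import all_boot all_order.
Set Implicit Arguments. Unset Strict Implicit. Unset Printing Implicit Defensive.

Definition simple_graph (V : finType) (adj : rel V) : Prop :=
  irreflexive adj /\ symmetric adj.
Definition connected_graph (V : finType) (adj : rel V) : Prop :=
  forall i j : V, connect adj i j.

Definition nbrs (V : finType) (adj : rel V) (v : V) : {set V} := [set j | adj v j].

Definition is_state (V : finType) (adj : rel V) (x : {ffun V -> nat}) : Prop :=
  forall i j, adj i j -> x i * x j = 0.

(* a list of preferences: for each class i a linear ordering of E(i),
   represented as a duplicate-free enumeration of E(i) (first = most preferred) *)
Definition is_prefs (V : finType) (adj : rel V) (sigma : V -> seq V) : Prop :=
  forall i, uniq (sigma i) /\ (forall j, (j \in sigma i) = adj i j).

Definition unitv (V : finType) (v : V) : {ffun V -> nat} :=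
  [ffun i => (i == v) : nat].

Definition Pset (V : finType) (adj : rel V) (x : {ffun V -> nat}) (v : V) : {set V} :=
  [set j | adj v j & 0 < x j].

Definition nbmax (V : finType) (adj : rel V) (x : {ffun V -> nat}) (v : V) : nat :=
  \max_(j | adj v j) x j.
Definition Lset (V : finType) (adj : rel V) (x : {ffun V -> nat}) (v : V) : {set V} :=
  [set i | adj v i & x i == nbmax adj x v].

(* p(x,v,sigma): first element of L(x,v) in the ordering sigma(v)
   (default v if there is none, which never happens when P(x,v) is nonempty) *)
Definition pml (V : finType) (adj : rel V) (x : {ffun V -> nat}) (v : V)
  (sigma : V -> seq V) : V :=
  nth v (sigma v) (find (fun i => i \in Lset adj x v) (sigma v)).

Definition ml_step (V : finType) (adj : rel V) (x : {ffun V -> nat}) (v : V)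
  (sigma : V -> seq V) : {ffun V -> nat} :=
  if Pset adj x v == set0 then [ffun i => x i + unitv v i]
  else [ffun i => x i - unitv (pml adj x v sigma) i].

Definition distn (a b : nat) : nat := (a - b) + (b - a).
Definition l1dist (V : finType) (x y : {ffun V -> nat}) : nat :=
  \sum_(i : V) distn (x i) (y i).

From mathcomp Require Import all_boot all_order zify.

(* Only the classes v and p(x,v,σ), p(x',v,σ) change, by one unit each, so it
   suffices to compare the two-point contributions to the distance.  Adding a
   customer at v costs at most 1; removing one from a class where x exceeds x'
   gains 1.  If neither removal gains, then p(x,v,σ) and p(x',v,σ) are longest
   neighbours of v for both x and x'; both are then the first element of the
   same set in σ(v), so they coincide and the two steps change x and x' alike. *)

Lemma distnC (a b : nat) : distn a b = distn b a.
Proof. by rewrite /distn addnC. Qed.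

Lemma l1distC (V : finType) (x y : {ffun V -> nat}) : l1dist x y = l1dist y x.
Proof. by apply: eq_bigr => i _; rewrite distnC. Qed.

Lemma find_leq {T : Type} (x0 : T) {a : pred T} {s : seq T} {k : nat} :
  a (nth x0 s k) -> find a s <= k.
Proof. by move=> ak; rewrite leqNgt; apply: contraL ak => /(before_find x0) ->. Qed.

Section L1Dist.
Variable V : finType.
Implicit Types x y : {ffun V -> nat}.

Lemma l1dist_le_pointwise x x' y y' :
  (forall i, distn (y' i) (y i) <= distn (x' i) (x i)) -> l1dist y' y <= l1dist x' x.
Proof. by move=> le_yx; apply: leq_sum => i _. Qed.

Lemma l1dist_le_two_point x x' y y' (p q : V) : p != q ->
  (forall i, i != p -> i != q -> y' i = x' i /\ y i = x i) ->
  distn (y' p) (y p) + distn (y' q) (y q) <= distn (x' p) (x p) + distn (x' q) (x q) ->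
  l1dist y' y <= l1dist x' x.
Proof.
move=> neq_pq eq_off le_pq.
have sum_split (f : V -> nat) :
    \sum_i f i = f p + f q + \sum_(i | (i != p) && (i != q)) f i.
  rewrite (bigD1 p) //= (bigD1 q) 1?eq_sym //= addnA.
  by congr (_ + _); apply: eq_bigl => i; rewrite andbC.
rewrite /l1dist sum_split [leqRHS]sum_split (eq_bigr (fun i => distn (x' i) (x i))).
  by rewrite leq_add2r.
by move=> i /andP [ip iq]; case: (eq_off i ip iq) => -> ->.
Qed.

End L1Dist.

Section MatchTheLongest.
Variables (V : finType) (adj : rel V) (sigma : V -> seq V) (v : V).
Hypothesis adj_irr : irreflexive adj.
Hypothesis sigma_prefs : is_prefs adj sigma.
Implicit Types x : {ffun V -> nat}.

Lemma leq_nbmax x j : adj v j -> x j <= nbmax adj x v.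
Proof. by move=> vj; rewrite /nbmax (leq_bigmax_cond _ vj). Qed.

Lemma pml_spec {x} : Pset adj x v != set0 ->
  [/\ adj v (pml adj x v sigma), x (pml adj x v sigma) = nbmax adj x v
    & 0 < x (pml adj x v sigma)].
Proof.
case/set0Pn => j; rewrite inE => /andP [vj xj_gt0].
have [i0 vi0 max_i0] : exists2 i0, adj v i0 & nbmax adj x v = x i0.
  have : 0 < #|[pred i | adj v i]| by apply/card_gt0P; exists j.
  by move/(eq_bigmax_cond x) => [i0 vi0 max_i0]; exists i0.
have hasL : has (fun i => i \in Lset adj x v) (sigma v).
  apply/hasP; exists i0; first by rewrite (proj2 (sigma_prefs v)).
  by rewrite inE vi0 max_i0 eqxx.
have := nth_find v hasL; rewrite -/(pml adj x v sigma) inE => /andP [vp /eqP ->].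
by split=> //; rewrite (leq_trans xj_gt0) // leq_nbmax.
Qed.

Lemma pml_neq {x} : Pset adj x v != set0 -> pml adj x v sigma != v.
Proof. by case/pml_spec => vp _ _; apply: contraTneq vp => ->; rewrite adj_irr. Qed.

Lemma Pset_eq0_pml {x x'} : Pset adj x' v = set0 -> Pset adj x v != set0 ->
  x' (pml adj x v sigma) = 0.
Proof.
move=> P'0 /pml_spec [vp _ _]; apply/eqP; rewrite -leqn0 leqNgt.
by apply: contraT => /negbNE xp; have := in_set0 (pml adj x v sigma);
  rewrite -P'0 inE vp xp.
Qed.

Lemma pml_eq {x x'} :
  pml adj x v sigma \in Lset adj x' v -> pml adj x' v sigma \in Lset adj x v ->
  pml adj x v sigma = pml adj x' v sigma.
Proof.
move=> Lp Lq; rewrite /pml; congr nth; apply/eqP.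
by rewrite eqn_leq (find_leq v Lq) (find_leq v Lp).
Qed.

Lemma ml_add_sub_nonexpansive x x' : Pset adj x' v = set0 -> Pset adj x v != set0 ->
  l1dist [ffun i => x' i + unitv v i] [ffun i => x i - unitv (pml adj x v sigma) i]
  <= l1dist x' x.
Proof.
move=> P'0 Pn0; have [_ _ xp_gt0] := pml_spec Pn0.
have x'p0 := Pset_eq0_pml P'0 Pn0; have neq_pv := pml_neq Pn0.
set p := pml adj x v sigma in xp_gt0 x'p0 neq_pv *.
apply: (@l1dist_le_two_point _ _ _ _ _ v p); first by rewrite eq_sym.
  by move=> i iv ip; rewrite !ffunE (negbTE iv) (negbTE ip) addn0 subn0.
by rewrite !ffunE !eqxx (negbTE neq_pv) eq_sym (negbTE neq_pv) /distn /=; lia.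
Qed.

Lemma ml_sub_sub_nonexpansive x x' : Pset adj x v != set0 -> Pset adj x' v != set0 ->
  l1dist [ffun i => x' i - unitv (pml adj x' v sigma) i]
         [ffun i => x i - unitv (pml adj x v sigma) i] <= l1dist x' x.
Proof.
move=> Pn0 P'n0.
have [vp max_p _] := pml_spec Pn0; have [vq max_q _] := pml_spec P'n0.
set p := pml adj x v sigma in vp max_p *; set q := pml adj x' v sigma in vq max_q *.
have le_qp : x q <= x p by rewrite max_p leq_nbmax.
have le_pq' : x' p <= x' q by rewrite max_q leq_nbmax.
have [eq_pq | neq_pq] := eqVneq p q.
  by apply: l1dist_le_pointwise => i; rewrite !ffunE -/p -/q eq_pq /distn; lia.
have gain : (x' p < x p) || (x q < x' q).
  apply: contraT; rewrite negb_or -!leqNgt => /andP [le_p le_q].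
  suff : p = q by move/eqP; rewrite (negbTE neq_pq).
  apply: pml_eq.
    by rewrite inE vp -max_q eqn_leq le_pq' /= (leq_trans le_q (leq_trans le_qp le_p)).
  by rewrite inE vq -max_p eqn_leq le_qp /= (leq_trans le_p (leq_trans le_pq' le_q)).
apply: (@l1dist_le_two_point _ _ _ _ _ p q) => //.
  by move=> i ip iq; rewrite !ffunE -/p -/q (negbTE ip) (negbTE iq) !subn0.
rewrite !ffunE -/p -/q !eqxx (negbTE neq_pq) eq_sym (negbTE neq_pq) /distn /=.
by case/orP: gain; lia.
Qed.

End MatchTheLongest.

Theorem mainTheorem7 (V : finType) (adj : rel V)
  (Hsimple : simple_graph adj) (Hconn : connected_graph adj)
  (x x' : {ffun V -> nat}) (Hx : is_state adj x) (Hx' : is_state adj x')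
  (v : V) (sigma : V -> seq V) (Hsigma : is_prefs adj sigma) :
  l1dist (ml_step adj x' v sigma) (ml_step adj x v sigma) <= l1dist x' x.
Proof.
have [adj_irr _] := Hsimple.
rewrite /ml_step; case: eqP => [P'0 | /eqP P'n0]; case: eqP => [P0 | /eqP Pn0].
- by apply: l1dist_le_pointwise => i; rewrite !ffunE /distn; lia.
- exact: ml_add_sub_nonexpansive.
- by rewrite l1distC [l1dist x' x]l1distC; apply: ml_add_sub_nonexpansive.
- exact: ml_sub_sub_nonexpansive.
Qed.
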